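(* Fix $c_5\in(0,c_4)$ and put $c_6=c_4-c_5$. There is $c_7>0$ such that for all $\beta$ large enough, $$\sup_{E\Subset\Lambda}\ \sup_{o\in E}\ \sum_{J\in\mathcal J(E):\,o\in\mathrm{supp}\,J}e^{-\beta c_6\,\mathrm{size}\,J}\le e^{-\beta c_7}.$$ Furthermore, with $K(J)=e^{-\beta c_4\,\mathrm{size}\,J}$ and $a(J)=\beta c_5\eta|\mathrm{supp}\,J|$ for $J\in\mathcal J(E)$: for every finite $\tilde{\mathcal J}\subseteq\mathcal J(E)$, $$\sup_{E\Subset\Lambda}\sup_{o\in E}\sum_{J\in\tilde{\mathcal J}:\,o\in\mathrm{supp}\,J}K(J)e^{a(J)}\le e^{-\beta c_7},$$ and, for all $\beta$ large enough (uniformly in $E$ and $\tilde{\mathcal J}$), for every $I\in\tilde{\mathcal J}$, $$\sum_{J\in\tilde{\mathcal J}}K(J)\,1_{\{I\sim J\}}\,e^{a(J)}\le a(I).$$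
   Context: $\Gamma\subset\mathbb{R}^3$ is a rank-3 lattice, $\eta=\min\{|\gamma|:\gamma\in\Gamma\setminus\{0\}\}$. $(V_\Lambda,\Lambda)$ is a periodic lattice graph in $\mathbb{R}^3$ of bounded degree; edges carry counting directions and $s_{ve}\in\{1,-1,0\}$ is the signed incidence ($1$ if $v$ is the head of $e$, $-1$ if the tail, $0$ otherwise). For finite $E\subset\Lambda$ (written $E\Subset\Lambda$) with endpoint set $V$, $\mathcal I(E)=\{I\in\Gamma^E:\sum_es_{ve}I_e=0\ \forall v\in V\}$, $\|I\|_1=\sum_e|I_e|$, $\mathrm{supp}\,I=\{e:I_e\neq0\}$. A set of edges is connected if the graph formed by these edges (with their endpoints) is connected. $\mathcal J(E)=\{I\in\mathcal I(E):\mathrm{supp}\,I\text{ nonempty and connected}\}$. Two elements $I,J$ are incompatible, $I\sim J$, if some edge of $\mathrm{supp}\,I$ shares a vertex with some edge of $\mathrm{supp}\,J$ (so $I\sim I$). $\mathrm{size}\,I=\|I\|_1+\mathrm{diam}\,\mathrm{supp}\,I$, where diam is the diameter in the graph distance of the mesoscopic graph (maximal graph distance between endpoints of edges in the set). Constants: $c>0$ is the constant in the lower bound $H_{\mathrm{disl}}(I)\ge c\|I\|_1$, $c_3=1+\eta^{-1}$, $c_4=c/(2c_3)$. ''$\beta$ large enough'' means $\beta>\beta_0$ with $\beta_0$ depending only on $\Gamma$, the mesoscopic graph, $c$ (and $c_5$). *)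

From Stdlib Require Import Reals Lra ZArith List Classical ClassicalEpsilon.
Open Scope R_scope.

Definition R3 := (R * R * R)%type.
Definition r3add (x y : R3) : R3 :=
  let '(x1, x2, x3) := x in let '(y1, y2, y3) := y in (x1 + y1, x2 + y2, x3 + y3).
Definition r3scal (k : R) (x : R3) : R3 :=
  let '(x1, x2, x3) := x in (k * x1, k * x2, k * x3).
Definition r3norm (x : R3) : R :=
  let '(x1, x2, x3) := x in sqrt (x1 * x1 + x2 * x2 + x3 * x3).
Definition det3 (a b c : R3) : R :=
  let '(a1, a2, a3) := a in let '(b1, b2, b3) := b in let '(c1, c2, c3) := c in
  a1 * (b2 * c3 - b3 * c2) - a2 * (b1 * c3 - b3 * c1) + a3 * (b1 * c2 - b2 * c1).

(** * Lattices of rank 3 in R^3, given by a basis.  An element of the lattice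
    is represented by its integer coordinates in the basis (a bijection,
    since the basis is linearly independent). *)
Definition Z3 := (Z * Z * Z)%type.
Definition z3zero : Z3 := (0%Z, 0%Z, 0%Z).
Definition z3add (x y : Z3) : Z3 :=
  let '(x1, x2, x3) := x in let '(y1, y2, y3) := y in
  ((x1 + y1)%Z, (x2 + y2)%Z, (x3 + y3)%Z).
Definition z3scal (k : Z) (x : Z3) : Z3 :=
  let '(x1, x2, x3) := x in ((k * x1)%Z, (k * x2)%Z, (k * x3)%Z).
Definition z3_eqb (x y : Z3) : bool :=
  let '(x1, x2, x3) := x in let '(y1, y2, y3) := y in
  (Z.eqb x1 y1 && Z.eqb x2 y2 && Z.eqb x3 y3)%bool.

Record lattice3 := { lb1 : R3; lb2 : R3; lb3 : R3 }.
Definition rank3 (G : lattice3) : Prop := det3 (lb1 G) (lb2 G) (lb3 G) <> 0.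
Definition gvec (G : lattice3) (k : Z3) : R3 :=
  let '(k1, k2, k3) := k in
  r3add (r3add (r3scal (IZR k1) (lb1 G)) (r3scal (IZR k2) (lb2 G))) (r3scal (IZR k3) (lb3 G)).
Definition gnorm (G : lattice3) (k : Z3) : R := r3norm (gvec G k).
Definition is_min_norm (G : lattice3) (eta : R) : Prop :=
  (exists k, k <> z3zero /\ gnorm G k = eta) /\
  (forall k, k <> z3zero -> eta <= gnorm G k).

Record lgraph := { gV : R3 -> Prop; gE : R3 -> R3 -> Prop }.
Definition edge := (R3 * R3)%type.
Definition tail (e : edge) : R3 := fst e.
Definition head (e : edge) : R3 := snd e.
Definition is_edge (Gr : lgraph) (e : edge) : Prop := gE Gr (tail e) (head e).

Definition periodic_lattice_graph (Gr : lgraph) : Prop :=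
  (* edges join distinct vertices, each carries one counting direction *)
  (forall x y, gE Gr x y -> gV Gr x /\ gV Gr y /\ x <> y /\ ~ gE Gr y x) /\
  exists P : lattice3, rank3 P /\
    (forall k x, gV Gr x <-> gV Gr (r3add x (gvec P k))) /\
    (forall k x y, gE Gr x y <-> gE Gr (r3add x (gvec P k)) (r3add y (gvec P k))) /\
    (exists F : list R3, forall x, gV Gr x ->
        exists f k, In f F /\ x = r3add f (gvec P k)).

Definition incident (v : R3) (e : edge) : Prop := tail e = v \/ head e = v.

Definition bounded_degree (Gr : lgraph) : Prop :=
  exists D : nat, forall (v : R3) (L : list edge), NoDup L ->
    (forall e, In e L -> is_edge Gr e /\ incident v e) -> (length L <= D)%nat.

Definition finite_edge_set (Gr : lgraph) (E : list edge) : Prop :=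
  NoDup E /\ forall e, In e E -> is_edge Gr e.

Definition indic (P : Prop) : R :=
  if excluded_middle_informative P then 1 else 0.

Definition sinc (v : R3) (e : edge) : Z :=
  if excluded_middle_informative (v = head e) then 1%Z
  else if excluded_middle_informative (v = tail e) then (-1)%Z else 0%Z.

(** * Currents: I in Gamma^E is a list of lattice elements aligned with E. *)
Definition kirchhoff (E : list edge) (I : list Z3) : Prop :=
  forall v, (exists e, In e E /\ incident v e) ->
    fold_right z3add z3zero
      (map (fun p => z3scal (sinc v (fst p)) (snd p)) (combine E I)) = z3zero.

Definition is_current (E : list edge) (I : list Z3) : Prop :=
  length I = length E /\ kirchhoff E I.

Definition in_supp (E : list edge) (I : list Z3) (e : edge) : Prop :=
  exists g, In (e, g) (combine E I) /\ g <> z3zero.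

Definition supp_card (I : list Z3) : nat :=
  length (filter (fun g => negb (z3_eqb g z3zero)) I).

Definition l1norm (G : lattice3) (I : list Z3) : R :=
  fold_right Rplus 0 (map (gnorm G) I).

(** walks along (undirected) edges of a set S of edges: u = v0, v1, ..., vk = w
    where l = [v1; ...; vk]; its length is length l *)
Fixpoint walk (S : edge -> Prop) (u : R3) (l : list R3) (w : R3) : Prop :=
  match l with
  | nil => u = w
  | x :: l' => (S (u, x) \/ S (x, u)) /\ walk S x l' w
  end.

Definition supp_vertex (E : list edge) (I : list Z3) (v : R3) : Prop :=
  exists e, in_supp E I e /\ incident v e.

Definition supp_connected (E : list edge) (I : list Z3) : Prop :=
  forall u w, supp_vertex E I u -> supp_vertex E I w ->
    exists l, walk (in_supp E I) u l w.

Definition is_J (E : list edge) (I : list Z3) : Prop :=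
  is_current E I /\ (exists e, in_supp E I e) /\ supp_connected E I.

Definition is_gdist (Gr : lgraph) (u w : R3) (n : nat) : Prop :=
  (exists l, length l = n /\ walk (is_edge Gr) u l w) /\
  (forall l, walk (is_edge Gr) u l w -> (n <= length l)%nat).

Definition is_diam (Gr : lgraph) (E : list edge) (I : list Z3) (d : nat) : Prop :=
  (exists u w, supp_vertex E I u /\ supp_vertex E I w /\ is_gdist Gr u w d) /\
  (forall u w n, supp_vertex E I u -> supp_vertex E I w -> is_gdist Gr u w n ->
     (n <= d)%nat).

Definition diam (Gr : lgraph) (E : list edge) (I : list Z3) : nat :=
  epsilon (inhabits 0%nat) (is_diam Gr E I).

Definition size (G : lattice3) (Gr : lgraph) (E : list edge) (I : list Z3) : R :=
  l1norm G I + INR (diam Gr E I).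

Definition incompat (E : list edge) (I J : list Z3) : Prop :=
  exists e f v, in_supp E I e /\ in_supp E J f /\ incident v e /\ incident v f.

Definition sumR (l : list R) : R := fold_right Rplus 0 l.

Definition c3 (eta : R) : R := 1 + / eta.
Definition c4 (c eta : R) : R := c / (2 * c3 eta).
Definition c6 (c eta c5 : R) : R := c4 c eta - c5.

Definition Kw (G : lattice3) (Gr : lgraph) (c eta beta : R) (E : list edge) (J : list Z3) : R :=
  exp (- (beta * c4 c eta * size G Gr E J)).
Definition aw (c5 eta beta : R) (J : list Z3) : R :=
  beta * c5 * eta * INR (supp_card J).

From Pilot Require Import Defs.
From Stdlib Require Import Reals List Lra Lia ZArith Classical ClassicalEpsilon PropExtensionality.
Open Scope R_scope.

(** A current [J] on [E] is encoded edge by edge by its record: the value [J_e] on the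
    support, a boundary mark on the edges touching the support from outside, nothing
    elsewhere.  Since supports are connected, distinct currents through a common edge [o] are
    separated by their records ([currents_separated]), and a Kraft-type inequality for
    separated families ([separated_weight_sum]) bounds the sum of the product record weights by
    1, once the weights of the records of one edge sum to at most 1.  We weigh a boundary mark
    by 1/2 and a value [g] by [exp (- b1 |g|)], whose sum over nonzero lattice vectors is at
    most 1/2 for a suitable [b1] ([lattice_exp_sum]).  Comparing [exp (- s ||J||_1)] with the
    record weight edge by edge, and using that at most [2 D |supp J|] edges touch the support
    ([count_near_support], [D] the degree bound), yields the first claim for [s = beta c6]
    large ([polymer_sum_bound]).  The second claim follows from
    [K(J) e^{a(J)} <= exp (- beta c6 size J)] ([activity_bound]), and the third by summing the
    second over the edges touching [supp I] ([incompatible_sum_bound]). *)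

Definition holds (P : Prop) : bool := if excluded_middle_informative P then true else false.

Lemma holds_spec (P : Prop) : holds P = true <-> P.
Proof.
  unfold holds; destruct (excluded_middle_informative P); split; intros; auto; try discriminate.
Qed.

Lemma indic_true (P : Prop) : P -> indic P = 1.
Proof. intros; unfold indic; destruct (excluded_middle_informative P); tauto. Qed.

Lemma indic_false (P : Prop) : ~ P -> indic P = 0.
Proof. intros; unfold indic; destruct (excluded_middle_informative P); tauto. Qed.

Lemma indic_range (P : Prop) : 0 <= indic P <= 1.
Proof. unfold indic; destruct (excluded_middle_informative P); lra. Qed.

Lemma indic_iff (P Q : Prop) : (P <-> Q) -> indic P = indic Q.
Proof. intros H; f_equal; apply propositional_extensionality, H. Qed.

Lemma indic_eq_subst {A} (a b : A) (f : A -> R) : indic (a = b) * f a = indic (a = b) * f b.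
Proof.
  destruct (classic (a = b)) as [<-|Hne]; [reflexivity|].
  rewrite indic_false by auto; ring.
Qed.

Lemma indic_or_disjoint (P Q : Prop) : ~ (P /\ Q) -> indic (P \/ Q) = indic P + indic Q.
Proof.
  intros H. destruct (classic P) as [HP|HP].
  - rewrite (indic_true (P \/ Q)), (indic_true P), (indic_false Q) by tauto; lra.
  - rewrite (indic_false P) by tauto.
    destruct (classic Q) as [HQ|HQ]; [rewrite !indic_true|rewrite !indic_false]; tauto || lra.
Qed.

Definition countP {A} (P : A -> Prop) (l : list A) : nat := length (filter (fun x => holds (P x)) l).

Lemma sumR_app (l1 l2 : list R) : sumR (l1 ++ l2) = sumR l1 + sumR l2.
Proof. induction l1; simpl; [lra|]. rewrite IHl1; lra. Qed.

Lemma sumR_map_add {A} (f g : A -> R) l :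
  sumR (map (fun x => f x + g x) l) = sumR (map f l) + sumR (map g l).
Proof. induction l; simpl; [lra|]. rewrite IHl; lra. Qed.

Lemma sumR_map_scale {A} (c : R) (f : A -> R) l :
  sumR (map (fun x => c * f x) l) = c * sumR (map f l).
Proof. induction l; simpl; [lra|]. rewrite IHl; lra. Qed.

Lemma sumR_map_const {A} (c : R) (l : list A) : sumR (map (fun _ => c) l) = INR (length l) * c.
Proof. induction l; simpl; [lra|]. rewrite IHl. destruct (length l); simpl; lra. Qed.

Lemma sumR_map_ext {A} (f g : A -> R) l :
  (forall x, In x l -> f x = g x) -> sumR (map f l) = sumR (map g l).
Proof. intros H; rewrite (map_ext_in f g l H); reflexivity. Qed.

Lemma sumR_map_le {A} (f g : A -> R) l :
  (forall x, In x l -> f x <= g x) -> sumR (map f l) <= sumR (map g l).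
Proof.
  induction l as [|a l IH]; simpl; intros H; [lra|].
  pose proof (H a (or_introl eq_refl)); pose proof (IH (fun x Hx => H x (or_intror Hx))); lra.
Qed.

Lemma sumR_map_nonneg {A} (f : A -> R) l : (forall x, In x l -> 0 <= f x) -> 0 <= sumR (map f l).
Proof.
  intros H; replace 0 with (sumR (map (fun _ => 0) l)) by (rewrite sumR_map_const; ring).
  now apply sumR_map_le.
Qed.

Lemma sumR_ge_term {A} (f : A -> R) x l :
  In x l -> (forall y, 0 <= f y) -> f x <= sumR (map f l).
Proof.
  induction l as [|a l IH]; simpl; intros Hx Hf; [contradiction|].
  pose proof (Hf a); pose proof (sumR_map_nonneg f l (fun y _ => Hf y)).
  destruct Hx as [->|Hx]; [lra|]. specialize (IH Hx Hf); lra.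
Qed.

Lemma sumR_indic_filter {A} (P : A -> Prop) (f : A -> R) l :
  sumR (map (fun x => indic (P x) * f x) l) = sumR (map f (filter (fun x => holds (P x)) l)).
Proof.
  induction l as [|a l IH]; simpl; [lra|]. unfold holds at 1.
  destruct (excluded_middle_informative (P a)) as [Ha|Ha]; simpl.
  - rewrite indic_true by auto; lra.
  - rewrite indic_false by auto; lra.
Qed.

Lemma sumR_remove {A} (f : A -> R) (a : A) m :
  In a m -> (forall x, 0 <= f x) ->
  f a + sumR (map f (remove (fun x y => excluded_middle_informative (x = y)) a m)) <= sumR (map f m).
Proof.
  intros Hin Hf. induction m as [|b m IH]; simpl in *; [contradiction|].
  destruct (excluded_middle_informative (a = b)) as [<-|Hne].
  - destruct (classic (In a m)) as [Ham|Ham].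
    + specialize (IH Ham); pose proof (Hf a); lra.
    + rewrite notin_remove by auto; lra.
  - simpl. destruct Hin as [->|Hin]; [congruence|]. specialize (IH Hin); lra.
Qed.

Lemma sumR_incl {A} (f : A -> R) l m :
  NoDup l -> incl l m -> (forall x, 0 <= f x) -> sumR (map f l) <= sumR (map f m).
Proof.
  intros Hl; revert m; induction Hl as [|a l Ha Hl IH]; intros m Hlm Hf; simpl.
  - now apply sumR_map_nonneg.
  - assert (Ham : In a m) by (apply Hlm; left; reflexivity).
    pose proof (sumR_remove f a m Ham Hf).
    assert (Hrem : incl l (remove (fun x y => excluded_middle_informative (x = y)) a m)).
    { intros y Hy. apply in_in_remove; [intros ->; contradiction|]. apply Hlm; right; exact Hy. }
    specialize (IH _ Hrem Hf); lra.
Qed.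

Lemma sumR_swap {A B} (F : A -> B -> R) la lb :
  sumR (map (fun a => sumR (map (F a) lb)) la) = sumR (map (fun b => sumR (map (fun a => F a b) la)) lb).
Proof.
  induction la as [|a la IH]; simpl.
  - rewrite sumR_map_const; ring.
  - rewrite IH, <- sumR_map_add. reflexivity.
Qed.

Lemma sumR_list_prod {A B} (F : A -> R) (H : B -> R) l1 l2 :
  sumR (map (fun p => F (fst p) * H (snd p)) (list_prod l1 l2)) = sumR (map F l1) * sumR (map H l2).
Proof.
  induction l1 as [|a l1 IH]; simpl; [lra|].
  rewrite map_app, sumR_app, IH, map_map; simpl. rewrite sumR_map_scale; lra.
Qed.

Lemma sumR_indic_point {V} (vs : list V) (v : V) :
  NoDup vs -> sumR (map (fun w => indic (v = w)) vs) = indic (In v vs).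
Proof.
  induction 1 as [|w vs Hw Hvs IH]; simpl.
  - rewrite indic_false by tauto; reflexivity.
  - rewrite IH. destruct (classic (v = w)) as [<-|Hne].
    + rewrite (indic_false (In v vs)) by auto. rewrite !indic_true by auto; lra.
    + rewrite (indic_false (v = w)) by auto.
      rewrite (indic_iff (w = v \/ In v vs) (In v vs)) by (split; [intros [->|H]; tauto|auto]).
      lra.
Qed.

Lemma sumR_split_key {Y V} (k : Y -> option V) (g : Y -> R) (L : list Y) (vs : list V) :
  NoDup vs -> (forall J v, In J L -> k J = Some v -> In v vs) ->
  sumR (map g L) = sumR (map (fun J => indic (k J = None) * g J) L)
    + sumR (map (fun v => sumR (map (fun J => indic (k J = Some v) * g J) L)) vs).
Proof.
  intros Hvs Hcov. rewrite sumR_swap, <- sumR_map_add.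
  apply sumR_map_ext. intros J HJ.
  rewrite (sumR_map_ext _ (fun v => g J * indic (k J = Some v))) by (intros; ring).
  rewrite sumR_map_scale.
  destruct (k J) as [v|] eqn:Hk.
  - rewrite (sumR_map_ext _ (fun w => indic (v = w)))
      by (intros w _; apply indic_iff; split; [congruence|intros ->; reflexivity]).
    rewrite sumR_indic_point by exact Hvs.
    rewrite (indic_true (In v vs)) by eauto. rewrite indic_false by discriminate. ring.
  - rewrite (sumR_map_ext _ (fun _ => 0)) by (intros w _; apply indic_false; discriminate).
    rewrite sumR_map_const, indic_true by reflexivity. ring.
Qed.

Fixpoint prodR (l : list R) : R :=
  match l with nil => 1 | x :: l' => x * prodR l' end.

Lemma prodR_map_nonneg {A} (f : A -> R) l : (forall x, In x l -> 0 <= f x) -> 0 <= prodR (map f l).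
Proof.
  induction l as [|a l IH]; simpl; intros H; [lra|].
  apply Rmult_le_pos; [apply H; left; reflexivity|apply IH; auto].
Qed.

Lemma prodR_map_le {A} (f g : A -> R) l :
  (forall x, In x l -> 0 <= f x <= g x) -> prodR (map f l) <= prodR (map g l).
Proof.
  induction l as [|a l IH]; simpl; intros H; [lra|].
  assert (Ha := H a (or_introl eq_refl)).
  assert (Hl : forall x, In x l -> 0 <= f x <= g x) by auto.
  pose proof (prodR_map_nonneg f l (fun x Hx => proj1 (Hl x Hx))).
  apply Rmult_le_compat; try lra. apply IH; auto.
Qed.

Lemma prodR_map_mult {A} (f g : A -> R) l :
  prodR (map (fun x => f x * g x) l) = prodR (map f l) * prodR (map g l).
Proof. induction l; simpl; [lra|]. rewrite IHl; ring. Qed.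

Lemma prodR_map_count {A} (P : A -> Prop) (c : R) l :
  prodR (map (fun x => if holds (P x) then c else 1) l) = c ^ countP P l.
Proof.
  induction l as [|a l IH]; unfold countP in *; simpl; [reflexivity|].
  destruct (holds (P a)); simpl; rewrite IH; ring.
Qed.

Lemma exp_neg_sum {A} (a : R) (f : A -> R) l :
  exp (- (a * sumR (map f l))) = prodR (map (fun x => exp (- (a * f x))) l).
Proof.
  induction l; simpl.
  - rewrite Rmult_0_r, Ropp_0; apply exp_0.
  - rewrite <- IHl, <- exp_plus. f_equal; ring.
Qed.

Lemma exp_le (x y : R) : x <= y -> exp x <= exp y.
Proof. intros [H|H]; [apply Rlt_le, exp_increasing; auto|subst; lra]. Qed.

(** * A Kraft-type inequality for separated families

   Objects [J : Y] are described position by position: at a position [x : X] the object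
   carries a record [rec J x], either [None] (nothing recorded) or [Some v].  If the weights [q] of the possible
   records sum to at most 1, then the product weights of the members of a separated family
   also sum to at most 1: induct on [P], grouping the members by their record at the first
   position. *)

Section SeparatedFamilies.

Context {X Y V : Type}.
Variable rec : Y -> X -> option V.
Variable q : V -> R.

Definition record_weight (r : option V) : R := match r with None => 1 | Some v => q v end.

Definition weight (P : list X) (J : Y) : R := prodR (map (fun x => record_weight (rec J x)) P).

Definition separated (P : list X) (L : list Y) : Prop :=
  forall J J', In J L -> In J' L -> J <> J' ->
    exists x a b, In x P /\ rec J x = Some a /\ rec J' x = Some b /\ a <> b.

Hypothesis q_nonneg : forall v, 0 <= q v.
Hypothesis q_sum : forall vs, NoDup vs -> sumR (map q vs) <= 1.

Lemma weight_nonneg (P : list X) (J : Y) : 0 <= weight P J.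
Proof.
  apply prodR_map_nonneg. intros x _. destruct (rec J x); simpl; [apply q_nonneg|lra].
Qed.

Lemma separated_tail (x0 : X) (P : list X) (L : list Y) (S : Y -> Prop) :
  separated (x0 :: P) L ->
  (forall J J' a b, S J -> S J' -> rec J x0 = Some a -> rec J' x0 = Some b -> a = b) ->
  separated P (filter (fun J => holds (S J)) L).
Proof.
  intros Hsep Hagree J J' HJ HJ' Hne.
  apply filter_In in HJ as [HJ HSJ]; apply filter_In in HJ' as [HJ' HSJ'].
  rewrite holds_spec in HSJ, HSJ'.
  destruct (Hsep J J' HJ HJ' Hne) as [x [a [b [[<-|Hx] [Ha [Hb Hab]]]]]].
  - exfalso; exact (Hab (Hagree J J' a b HSJ HSJ' Ha Hb)).
  - exists x, a, b; auto.
Qed.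

Lemma recorded_values (x0 : X) (L : list Y) :
  exists vs, NoDup vs /\ forall J v, In J L -> rec J x0 = Some v -> In v vs.
Proof.
  exists (nodup (fun a b => excluded_middle_informative (a = b))
    (flat_map (fun J => match rec J x0 with Some v => v :: nil | None => nil end) L)).
  split; [apply NoDup_nodup|].
  intros J v HJ Hv. apply nodup_In, in_flat_map. exists J. rewrite Hv. simpl; auto.
Qed.

Lemma separated_nil_sum (L : list Y) : NoDup L -> separated nil L -> sumR (map (weight nil) L) <= 1.
Proof.
  intros HL Hsep. destruct L as [|J [|J' L]]; simpl; [lra|unfold weight; simpl; lra|].
  exfalso. inversion HL as [|? ? HJ]; subst.
  assert (Hne : J <> J') by (intros ->; apply HJ; left; reflexivity).
  destruct (Hsep J J' (or_introl eq_refl) (or_intror (or_introl eq_refl)) Hne) as [x [a [b [[] _]]]].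
Qed.

Lemma weight_cons_split (x0 : X) (P : list X) (L : list Y) (vs : list V) :
  NoDup vs -> (forall J v, In J L -> rec J x0 = Some v -> In v vs) ->
  sumR (map (weight (x0 :: P)) L) =
    sumR (map (fun J => indic (rec J x0 = None) * weight P J) L)
    + sumR (map (fun v => q v * sumR (map (fun J => indic (rec J x0 = Some v) * weight P J) L)) vs).
Proof.
  intros Hvs Hcov. rewrite (sumR_split_key (fun J => rec J x0) _ L vs Hvs Hcov).
  f_equal; apply sumR_map_ext.
  - intros J _. change (weight (x0 :: P) J) with (record_weight (rec J x0) * weight P J).
    rewrite (indic_eq_subst _ _ (fun r => record_weight r * weight P J)). simpl; ring.
  - intros v _. rewrite <- sumR_map_scale. apply sumR_map_ext. intros J _.
    change (weight (x0 :: P) J) with (record_weight (rec J x0) * weight P J).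
    rewrite (indic_eq_subst _ _ (fun r => record_weight r * weight P J)). simpl; ring.
Qed.

Theorem separated_weight_sum (P : list X) :
  forall L, NoDup L -> separated P L -> sumR (map (weight P) L) <= 1.
Proof.
  induction P as [|x0 P IH]; intros L HL Hsep; [now apply separated_nil_sum|].
  assert (Hsub : forall S : Y -> Prop,
      (forall J J' a b, S J -> S J' -> rec J x0 = Some a -> rec J' x0 = Some b -> a = b) ->
      sumR (map (fun J => indic (S J) * weight P J) L) <= 1).
  { intros S HS. rewrite sumR_indic_filter.
    apply IH; [apply NoDup_filter, HL|now apply (separated_tail x0)]. }
  set (T := sumR (map (fun J => indic (rec J x0 = None) * weight P J) L)).
  assert (HT : 0 <= T <= 1).
  { split; [|apply Hsub; intros; congruence].
    apply sumR_map_nonneg. intros J _. apply Rmult_le_pos; [apply indic_range|apply weight_nonneg]. }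
  (* the members recording [v] at [x0], together with those recording nothing, are compatible *)
  assert (Hval : forall v, sumR (map (fun J => indic (rec J x0 = Some v) * weight P J) L) <= 1 - T).
  { intros v.
    enough (sumR (map (fun J => indic (rec J x0 = Some v) * weight P J) L) + T <= 1) by lra.
    unfold T. rewrite <- sumR_map_add.
    rewrite (sumR_map_ext _ (fun J => indic (rec J x0 = Some v \/ rec J x0 = None) * weight P J)).
    - apply Hsub. intros J J' a b [HJ|HJ] [HJ'|HJ'] Ha Hb; congruence.
    - intros J _. rewrite indic_or_disjoint by (intros [H1 H2]; congruence). ring. }
  destruct (recorded_values x0 L) as [vs [Hvs Hcov]].
  rewrite (weight_cons_split x0 P L vs Hvs Hcov). fold T.
  apply Rle_trans with (T + sumR (map (fun v => (1 - T) * q v) vs)).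
  - apply Rplus_le_compat_l, sumR_map_le. intros v _.
    rewrite (Rmult_comm (1 - T)). apply Rmult_le_compat_l; [apply q_nonneg|apply Hval].
  - rewrite sumR_map_scale. pose proof (q_sum vs Hvs). nra.
Qed.

End SeparatedFamilies.

(** * Exponential sums over the lattice Gamma *)

Definition coord_l1 (k : Z3) : R :=
  let '(k1, k2, k3) := k in Rabs (IZR k1) + Rabs (IZR k2) + Rabs (IZR k3).

Lemma coord_l1_ge1 (k : Z3) : k <> z3zero -> 1 <= coord_l1 k.
Proof.
  destruct k as [[k1 k2] k3]; unfold coord_l1, z3zero; intros H.
  rewrite !Rabs_Zabs.
  assert (H0 : forall z, 0 <= IZR (Z.abs z)) by (intros; apply IZR_le; lia).
  assert (H1 : forall z, z <> 0%Z -> 1 <= IZR (Z.abs z)) by (intros; apply IZR_le; lia).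
  pose proof (H0 k1); pose proof (H0 k2); pose proof (H0 k3).
  destruct (Z.eq_dec k1 0); [destruct (Z.eq_dec k2 0); [destruct (Z.eq_dec k3 0)|]|].
  - subst; congruence.
  - pose proof (H1 k3 n); lra.
  - pose proof (H1 k2 n); lra.
  - pose proof (H1 k1 n); lra.
Qed.

Lemma gnorm_nonneg (G : lattice3) (k : Z3) : 0 <= gnorm G k.
Proof. unfold gnorm, r3norm. destruct (gvec G k) as [[? ?] ?]. apply sqrt_pos. Qed.

Lemma gnorm_zero (G : lattice3) : gnorm G z3zero = 0.
Proof.
  destruct G as [[[a1 a2] a3] [[b1 b2] b3] [[c1 c2] c3]].
  unfold gnorm, gvec, z3zero, r3norm, r3add, r3scal; simpl.
  match goal with |- sqrt ?x = 0 => replace x with 0 by ring end. apply sqrt_0.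
Qed.

Lemma Rabs_le_sqrt_sum3 (x1 x2 x3 : R) : Rabs x1 <= sqrt (x1 * x1 + x2 * x2 + x3 * x3).
Proof. rewrite <- sqrt_Rsqr_abs. apply sqrt_le_1_alt. unfold Rsqr. nra. Qed.

(** One step of Cramer's rule: if [k d] is a combination of numbers bounded by [N], then
    [|k| |d|] is bounded by [N] times the l1 norm of the coefficients. *)
Lemma cramer_coordinate_bound (k d x1 x2 x3 m1 m2 m3 N : R) :
  k * d = x1 * m1 + x2 * m2 + x3 * m3 ->
  Rabs x1 <= N -> Rabs x2 <= N -> Rabs x3 <= N ->
  Rabs k * Rabs d <= N * (Rabs m1 + Rabs m2 + Rabs m3).
Proof.
  intros Hkd H1 H2 H3. rewrite <- Rabs_mult, Hkd.
  eapply Rle_trans; [apply Rabs_triang|].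
  eapply Rle_trans; [apply Rplus_le_compat_r, Rabs_triang|].
  rewrite !Rabs_mult.
  pose proof (Rabs_pos m1); pose proof (Rabs_pos m2); pose proof (Rabs_pos m3).
  pose proof (Rmult_le_compat_r _ _ _ H H1); pose proof (Rmult_le_compat_r _ _ _ H0 H2).
  pose proof (Rmult_le_compat_r _ _ _ H4 H3). lra.
Qed.

Lemma gnorm_coord_lower_bound (G : lattice3) :
  rank3 G -> exists al, 0 < al /\ forall k, al * coord_l1 k <= gnorm G k.
Proof.
  destruct G as [[[a1 a2] a3] [[b1 b2] b3] [[c1 c2] c3]]. unfold rank3, det3; simpl. intros Hd.
  set (d := a1 * (b2 * c3 - b3 * c2) - a2 * (b1 * c3 - b3 * c1) + a3 * (b1 * c2 - b2 * c1)) in *.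
  set (C := (Rabs (b2 * c3 - b3 * c2) + Rabs (b3 * c1 - b1 * c3) + Rabs (b1 * c2 - b2 * c1))
          + (Rabs (a3 * c2 - a2 * c3) + Rabs (a1 * c3 - a3 * c1) + Rabs (a2 * c1 - a1 * c2))
          + (Rabs (a2 * b3 - a3 * b2) + Rabs (a3 * b1 - a1 * b3) + Rabs (a1 * b2 - a2 * b1))).
  assert (HC : 0 <= C) by (unfold C; repeat apply Rplus_le_le_0_compat; apply Rabs_pos).
  assert (Hdp : 0 < Rabs d) by (apply Rabs_pos_lt; auto).
  exists (Rabs d / (C + 1)). split; [apply Rdiv_lt_0_compat; lra|].
  intros [[k1 k2] k3]. unfold gnorm, gvec, r3norm, r3add, r3scal, coord_l1; simpl.
  set (x1 := IZR k1 * a1 + IZR k2 * b1 + IZR k3 * c1).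
  set (x2 := IZR k1 * a2 + IZR k2 * b2 + IZR k3 * c2).
  set (x3 := IZR k1 * a3 + IZR k2 * b3 + IZR k3 * c3).
  set (N := sqrt (x1 * x1 + x2 * x2 + x3 * x3)).
  assert (H1 : Rabs x1 <= N) by apply Rabs_le_sqrt_sum3.
  assert (H2 : Rabs x2 <= N)
    by (unfold N; replace (x1 * x1 + x2 * x2 + x3 * x3) with (x2 * x2 + x1 * x1 + x3 * x3) by ring;
        apply Rabs_le_sqrt_sum3).
  assert (H3 : Rabs x3 <= N)
    by (unfold N; replace (x1 * x1 + x2 * x2 + x3 * x3) with (x3 * x3 + x1 * x1 + x2 * x2) by ring;
        apply Rabs_le_sqrt_sum3).
  pose proof (cramer_coordinate_bound (IZR k1) d x1 x2 x3
    (b2 * c3 - b3 * c2) (b3 * c1 - b1 * c3) (b1 * c2 - b2 * c1) N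
    ltac:(unfold x1, x2, x3, d; ring) H1 H2 H3).
  pose proof (cramer_coordinate_bound (IZR k2) d x1 x2 x3
    (a3 * c2 - a2 * c3) (a1 * c3 - a3 * c1) (a2 * c1 - a1 * c2) N
    ltac:(unfold x1, x2, x3, d; ring) H1 H2 H3).
  pose proof (cramer_coordinate_bound (IZR k3) d x1 x2 x3
    (a2 * b3 - a3 * b2) (a3 * b1 - a1 * b3) (a1 * b2 - a2 * b1) N
    ltac:(unfold x1, x2, x3, d; ring) H1 H2 H3).
  assert (HN : 0 <= N) by apply sqrt_pos.
  unfold Rdiv. rewrite Rmult_comm, <- Rmult_assoc.
  apply (Rmult_le_reg_r (C + 1)); [lra|]. rewrite Rmult_assoc, Rinv_l by lra.
  unfold C in *. nra.
Qed.

Lemma geometric_partial_sum (x : R) (k N : nat) :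
  0 <= x < 1 -> sumR (map (fun n => x ^ n) (seq k N)) <= x ^ k / (1 - x).
Proof.
  intros Hx. revert k. induction N; intros k; simpl.
  - apply Rmult_le_pos; [apply pow_le; lra|apply Rlt_le, Rinv_0_lt_compat; lra].
  - specialize (IHN (S k)). simpl in IHN.
    assert (x ^ k / (1 - x) = x ^ k + x * x ^ k / (1 - x)) by (field; lra). lra.
Qed.

(** The integers of absolute value below [N] (zero listed twice). *)
Definition zinterval (N : nat) : list Z :=
  map Z.of_nat (seq 0 N) ++ map (fun n => Z.opp (Z.of_nat n)) (seq 0 N).

Lemma zinterval_In (N : nat) (z : Z) : (Z.abs z < Z.of_nat N)%Z -> In z (zinterval N).
Proof.
  intros H. unfold zinterval. apply in_or_app. destruct (Z_le_gt_dec 0 z).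
  - left. apply in_map_iff. exists (Z.to_nat z). split; [lia|apply in_seq; lia].
  - right. apply in_map_iff. exists (Z.to_nat (- z)). split; [lia|apply in_seq; lia].
Qed.

Lemma zinterval_exp_sum (s : R) (N : nat) :
  0 < s -> sumR (map (fun z => exp (- s * Rabs (IZR z))) (zinterval N)) <= 2 / (1 - exp (- s)).
Proof.
  intros Hs. unfold zinterval. rewrite map_app, sumR_app, !map_map.
  assert (Hx : 0 <= exp (- s) < 1)
    by (split; [apply Rlt_le, exp_pos|rewrite <- exp_0; apply exp_increasing; lra]).
  assert (Hpow : forall n, exp (- s * INR n) = exp (- s) ^ n).
  { induction n; [simpl; rewrite Rmult_0_r; apply exp_0|].
    rewrite S_INR; simpl. rewrite <- IHn, <- exp_plus. f_equal; ring. }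
  rewrite (sumR_map_ext _ (fun n => exp (- s) ^ n) (seq 0 N)).
  rewrite (sumR_map_ext (fun x => exp (- s * Rabs (IZR (- Z.of_nat x)))) (fun n => exp (- s) ^ n)).
  - pose proof (geometric_partial_sum (exp (- s)) 0 N Hx). simpl in H. lra.
  - intros n _. rewrite opp_IZR, Rabs_Ropp, <- INR_IZR_INZ, Rabs_pos_eq by apply pos_INR. apply Hpow.
  - intros n _. rewrite <- INR_IZR_INZ, Rabs_pos_eq by apply pos_INR. apply Hpow.
Qed.

Lemma box_bound (L : list Z3) : exists N, forall k1 k2 k3, In (k1, k2, k3) L ->
  (Z.abs k1 < Z.of_nat N)%Z /\ (Z.abs k2 < Z.of_nat N)%Z /\ (Z.abs k3 < Z.of_nat N)%Z.
Proof.
  induction L as [|[[a b] c] L [N HN]]; [exists 0%nat; intros; contradiction|].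
  exists (N + Z.to_nat (Z.abs a) + Z.to_nat (Z.abs b) + Z.to_nat (Z.abs c) + 1)%nat.
  intros k1 k2 k3 [Heq|Hin]; [inversion Heq; subst; lia|]. specialize (HN _ _ _ Hin). lia.
Qed.

Lemma coord_exp_sum (s : R) (L : list Z3) :
  0 < s -> NoDup L -> sumR (map (fun k => exp (- s * coord_l1 k)) L) <= (2 / (1 - exp (- s))) ^ 3.
Proof.
  intros Hs HL. destruct (box_bound L) as [N HN].
  set (f := fun z : Z => exp (- s * Rabs (IZR z))).
  assert (Hf : forall z, 0 <= f z) by (intros; apply Rlt_le, exp_pos).
  rewrite (sumR_map_ext _ (fun k => f (fst (fst k)) * f (snd (fst k)) * f (snd k))).
  2:{ intros [[k1 k2] k3] _. unfold f, coord_l1; simpl. rewrite <- !exp_plus. f_equal; ring. }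
  eapply Rle_trans.
  - apply (sumR_incl _ L (list_prod (list_prod (zinterval N) (zinterval N)) (zinterval N)) HL).
    + intros [[k1 k2] k3] Hk. destruct (HN _ _ _ Hk) as [A [B C]].
      apply in_prod; [apply in_prod|]; apply zinterval_In; auto.
    + intros [[k1 k2] k3]. simpl. repeat apply Rmult_le_pos; apply Hf.
  - rewrite (sumR_list_prod (fun p => f (fst p) * f (snd p)) f), sumR_list_prod.
    pose proof (zinterval_exp_sum s N Hs). fold f in H.
    assert (0 <= sumR (map f (zinterval N))) by (apply sumR_map_nonneg; auto).
    replace ((2 / (1 - exp (- s))) ^ 3)
      with (2 / (1 - exp (- s)) * (2 / (1 - exp (- s))) * (2 / (1 - exp (- s)))) by ring.
    repeat apply Rmult_le_compat; auto using Rmult_le_pos.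
Qed.

Definition lattice_weight (G : lattice3) (b : R) (g : Z3) : R :=
  if excluded_middle_informative (g = z3zero) then 0 else exp (- b * gnorm G g).

Lemma lattice_weight_nonneg (G : lattice3) (b : R) (g : Z3) : 0 <= lattice_weight G b g.
Proof.
  unfold lattice_weight. destruct (excluded_middle_informative (g = z3zero)); [lra|].
  apply Rlt_le, exp_pos.
Qed.

Lemma lattice_exp_sum (G : lattice3) :
  rank3 G -> exists b1, 0 < b1 /\ forall L, NoDup L -> sumR (map (lattice_weight G b1) L) <= 1 / 2.
Proof.
  intros HG. destruct (gnorm_coord_lower_bound G HG) as [al [Hal Hlb]].
  set (s := ln 128).
  assert (Hs : 0 < s) by (unfold s; rewrite <- ln_1; apply ln_increasing; lra).
  assert (Hx : exp (- s) = / 128) by (unfold s; rewrite exp_Ropp, exp_ln; lra).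
  exists (2 * s / al). split; [apply Rdiv_lt_0_compat; lra|]. intros L HL.
  apply Rle_trans with (sumR (map (fun k => exp (- s) * exp (- s * coord_l1 k)) L)).
  - apply sumR_map_le. intros k _. unfold lattice_weight.
    destruct (excluded_middle_informative (k = z3zero)) as [_|Hk].
    + apply Rmult_le_pos; apply Rlt_le, exp_pos.
    + rewrite <- exp_plus. apply exp_le.
      pose proof (Hlb k); pose proof (coord_l1_ge1 k Hk).
      assert (2 * s * coord_l1 k <= 2 * s / al * gnorm G k).
      { replace (2 * s * coord_l1 k) with (2 * s / al * (al * coord_l1 k)) by (field; lra).
        apply Rmult_le_compat_l; [apply Rlt_le, Rdiv_lt_0_compat|]; lra. }
      nra.
  - rewrite sumR_map_scale, Hx.
    pose proof (coord_exp_sum s L Hs HL) as Hsum. rewrite Hx in Hsum.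
    assert (0 <= sumR (map (fun k => exp (- s * coord_l1 k)) L))
      by (apply sumR_map_nonneg; intros; apply Rlt_le, exp_pos).
    assert (Hq : 2 / (1 - / 128) <= 3) by (apply Rmult_le_reg_r with (1 - / 128); [lra|];
      unfold Rdiv; rewrite Rmult_assoc, Rinv_l; lra).
    assert ((2 / (1 - / 128)) ^ 3 <= 27).
    { replace 27 with (3 ^ 3) by ring. apply pow_incr. split; [|exact Hq].
      apply Rlt_le, Rdiv_lt_0_compat; lra. }
    lra.
Qed.

Fixpoint current_at (E : list edge) (J : list Z3) (e : edge) : Z3 :=
  match E, J with
  | e' :: E', g :: J' => if excluded_middle_informative (e = e') then g else current_at E' J' e
  | _, _ => z3zero
  end.

Lemma in_combine_current_at (E : list edge) (J : list Z3) (e : edge) (g : Z3) :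
  NoDup E -> length J = length E -> (In (e, g) (combine E J) <-> In e E /\ current_at E J e = g).
Proof.
  revert J. induction E as [|e' E IH]; intros [|g' J] Hnd Hl; simpl in *; try discriminate; [tauto|].
  inversion Hnd; subst. injection Hl as Hl.
  destruct (excluded_middle_informative (e = e')) as [->|Hne].
  - split; [intros [H|H]; [inversion H; auto|apply in_combine_l in H; contradiction]|].
    intros [_ ->]; auto.
  - rewrite IH by auto. split; [intros [H|H]; [inversion H; congruence|tauto]|].
    intros [[H|H] H']; [congruence|auto].
Qed.

Lemma in_supp_iff (E : list edge) (J : list Z3) (e : edge) :
  NoDup E -> length J = length E -> (in_supp E J e <-> In e E /\ current_at E J e <> z3zero).
Proof.
  intros Hnd Hl. unfold in_supp. split.
  - intros [g [Hin Hg]]. apply in_combine_current_at in Hin as [He <-]; auto.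
  - intros [He Hg]. exists (current_at E J e). split; auto. apply in_combine_current_at; auto.
Qed.

Lemma in_supp_In (E : list edge) (J : list Z3) (e : edge) : in_supp E J e -> In e E.
Proof. intros [g [H _]]. apply in_combine_l in H; exact H. Qed.

Lemma current_ext (E : list edge) (J J' : list Z3) :
  NoDup E -> length J = length E -> length J' = length E ->
  (forall e, In e E -> current_at E J e = current_at E J' e) -> J = J'.
Proof.
  revert J J'. induction E as [|e E IH]; intros [|g J] [|g' J'] Hnd Hl Hl' H;
    simpl in *; try discriminate; auto.
  inversion Hnd; subst. injection Hl as Hl; injection Hl' as Hl'.
  pose proof (H e (or_introl eq_refl)) as He.
  destruct (excluded_middle_informative (e = e)); [subst g'|congruence].
  f_equal. apply IH; auto. intros x Hx.
  pose proof (H x (or_intror Hx)) as Hx'.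
  destruct (excluded_middle_informative (x = e)) as [->|_]; [contradiction|exact Hx'].
Qed.

Lemma l1norm_edges (G : lattice3) (E : list edge) (J : list Z3) :
  NoDup E -> length J = length E -> l1norm G J = sumR (map (fun e => gnorm G (current_at E J e)) E).
Proof.
  revert J. induction E as [|e E IH]; intros [|g J] Hnd Hl; simpl in *; try discriminate; auto.
  inversion Hnd; subst. injection Hl as Hl. unfold l1norm in *; simpl.
  destruct (excluded_middle_informative (e = e)); [|congruence]. f_equal.
  rewrite IH by auto. apply sumR_map_ext. intros x Hx.
  destruct (excluded_middle_informative (x = e)) as [->|_]; [contradiction|reflexivity].
Qed.

Lemma countP_ext {A} (P Q : A -> Prop) l :
  (forall x, In x l -> (P x <-> Q x)) -> countP P l = countP Q l.
Proof.
  intros H. unfold countP. f_equal. apply filter_ext_in. intros a Ha. unfold holds.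
  destruct (excluded_middle_informative (P a)), (excluded_middle_informative (Q a)); firstorder.
Qed.

Lemma countP_cons {A} (P : A -> Prop) (a : A) l :
  countP P (a :: l) = ((if holds (P a) then 1 else 0) + countP P l)%nat.
Proof. unfold countP; simpl. destruct (holds (P a)); reflexivity. Qed.

Lemma z3_eqb_zero (g : Z3) : z3_eqb g z3zero = true <-> g = z3zero.
Proof.
  destruct g as [[a b] c]; unfold z3_eqb, z3zero.
  rewrite !Bool.andb_true_iff, !Z.eqb_eq. split; [intros [[-> ->] ->]|intros H; inversion H]; auto.
Qed.

Lemma supp_card_count (E : list edge) (J : list Z3) :
  NoDup E -> length J = length E -> supp_card J = countP (in_supp E J) E.
Proof.
  intros Hnd Hl.
  rewrite (countP_ext _ (fun e => current_at E J e <> z3zero))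
    by (intros x Hx; rewrite in_supp_iff by auto; tauto).
  revert J Hl. induction E as [|e E IH]; intros [|g J] Hl; try discriminate; [reflexivity|].
  inversion Hnd; subst. injection Hl as Hl.
  rewrite countP_cons. cbn [current_at].
  destruct (excluded_middle_informative (e = e)); [|congruence].
  rewrite (countP_ext _ (fun x => current_at E J x <> z3zero) E)
    by (intros x Hx; destruct (excluded_middle_informative (x = e)) as [->|_]; [contradiction|tauto]).
  rewrite <- IH by auto. unfold supp_card; simpl.
  unfold holds. destruct (excluded_middle_informative (g <> z3zero)) as [Hg|Hg];
    destruct (z3_eqb g z3zero) eqn:Heq; simpl; auto.
  - exfalso. apply Hg, z3_eqb_zero, Heq.
  - exfalso. apply Hg. intros Hz. apply z3_eqb_zero in Hz. congruence.
Qed.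

Lemma l1norm_ge_supp_card (G : lattice3) (eta : R) (J : list Z3) :
  (forall g, g <> z3zero -> eta <= gnorm G g) -> eta * INR (supp_card J) <= l1norm G J.
Proof.
  intros H. induction J as [|g J IH]; unfold supp_card, l1norm in *; simpl; [lra|].
  destruct (z3_eqb g z3zero) eqn:Heq; cbn [negb length].
  - pose proof (gnorm_nonneg G g); lra.
  - rewrite S_INR. assert (Hg : g <> z3zero) by (intros Hz; apply z3_eqb_zero in Hz; congruence).
    pose proof (H g Hg); lra.
Qed.

Lemma l1norm_le_size (G : lattice3) (Gr : lgraph) (E : list edge) (J : list Z3) :
  l1norm G J <= size G Gr E J.
Proof. unfold size. pose proof (pos_INR (diam Gr E J)); lra. Qed.

Definition degree_at_most (Gr : lgraph) (D : nat) : Prop :=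
  forall (v : R3) (L : list edge), NoDup L ->
    (forall e, In e L -> is_edge Gr e /\ incident v e) -> (length L <= D)%nat.

Definition edges_at (E : list edge) (v : R3) : list edge := filter (fun e => holds (incident v e)) E.

Definition edges_near (E S : list edge) : list edge :=
  flat_map (fun s => edges_at E (Defs.tail s) ++ edges_at E (Defs.head s)) S.

Definition supp_edges (E : list edge) (J : list Z3) : list edge :=
  filter (fun e => holds (in_supp E J e)) E.

Definition touches_support (E : list edge) (J : list Z3) (e : edge) : Prop :=
  exists s v, in_supp E J s /\ incident v s /\ incident v e.

Lemma edges_near_length (Gr : lgraph) (D : nat) (E S : list edge) :
  finite_edge_set Gr E -> degree_at_most Gr D -> (length (edges_near E S) <= 2 * D * length S)%nat.
Proof.
  intros [Hnd HE] HD.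
  assert (Hat : forall v, (length (edges_at E v) <= D)%nat).
  { intros v. apply (HD v); [apply NoDup_filter, Hnd|].
    intros e He. apply filter_In in He as [He Hv]. rewrite holds_spec in Hv. auto. }
  induction S as [|s S IH]; simpl; [lia|].
  rewrite !length_app. fold (edges_near E S).
  pose proof (Hat (Defs.tail s)); pose proof (Hat (Defs.head s)). lia.
Qed.

Lemma edges_near_In (E S : list edge) (e s : edge) (v : R3) :
  In e E -> In s S -> incident v s -> incident v e -> In e (edges_near E S).
Proof.
  intros He Hs Hvs Hve. apply in_flat_map. exists s. split; auto. apply in_or_app.
  destruct Hvs as [Hv|Hv]; [left|right]; apply filter_In; split; auto; apply holds_spec; subst; auto.
Qed.

Lemma count_near_support (Gr : lgraph) (D : nat) (E : list edge) (J : list Z3) (P : edge -> Prop) :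
  finite_edge_set Gr E -> degree_at_most Gr D ->
  (forall e, In e E -> P e -> touches_support E J e) ->
  (countP P E <= 2 * D * countP (in_supp E J) E)%nat.
Proof.
  intros HE HD HP. eapply Nat.le_trans; [|apply (edges_near_length Gr D E (supp_edges E J) HE HD)].
  apply NoDup_incl_length; [apply NoDup_filter, HE|].
  intros e He. apply filter_In in He as [He HPe]. rewrite holds_spec in HPe.
  destruct (HP e He HPe) as [s [v [Hs [Hvs Hve]]]].
  apply (edges_near_In E _ e s v); auto.
  apply filter_In; split; [eapply in_supp_In; eauto|apply holds_spec; exact Hs].
Qed.

(** * Currents through a common edge are separated by their records *)

Definition record (E : list edge) (J : list Z3) (e : edge) : option (option Z3) :=
  if excluded_middle_informative (in_supp E J e) then Some (Some (current_at E J e))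
  else if excluded_middle_informative (touches_support E J e) then Some None
  else None.

Lemma walk_exits (S S' : edge -> Prop) (l : list R3) : forall u w,
  (exists s, S s /\ incident u s) -> walk S' u l w ->
  (exists f, S' f /\ ~ S f /\ incident w f) ->
  exists h, S' h /\ ~ S h /\ exists s v, S s /\ incident v s /\ incident v h.
Proof.
  induction l as [|x l IH]; intros u w [s [Hs Hus]] Hw Hf; simpl in Hw.
  - subst. destruct Hf as [f [Hf1 [Hf2 Hf3]]]. exists f; repeat split; auto. exists s, w; auto.
  - destruct Hw as [Hx Hw].
    assert (Hstep : forall h, S' h -> incident u h -> incident x h ->
      exists h0, S' h0 /\ ~ S h0 /\ exists s v, S s /\ incident v s /\ incident v h0).
    { intros h Hh Hu Hxh. destruct (classic (S h)) as [HSh|HSh].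
      - apply (IH x w); auto. exists h; auto.
      - exists h; repeat split; auto. exists s, u; auto. }
    destruct Hx as [Hx|Hx]; [apply (Hstep (u, x))|apply (Hstep (x, u))]; auto;
      unfold incident; simpl; auto.
Qed.

Lemma records_conflict (E : list edge) (J1 J2 : list Z3) (o f : edge) :
  in_supp E J1 o -> in_supp E J2 o -> supp_connected E J2 ->
  in_supp E J2 f -> ~ in_supp E J1 f ->
  exists x a b, In x E /\ record E J1 x = Some a /\ record E J2 x = Some b /\ a <> b.
Proof.
  intros Ho1 Ho2 Hcon Hf2 Hf1.
  destruct (Hcon (Defs.tail o) (Defs.tail f)) as [l Hw];
    [exists o; split; [auto|left; reflexivity]|exists f; split; [auto|left; reflexivity]|].
  destruct (walk_exits (in_supp E J1) (in_supp E J2) l (Defs.tail o) (Defs.tail f))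
    as [h [Hh2 [Hh1 Htouch]]]; auto.
  - exists o; split; [auto|left; reflexivity].
  - exists f; repeat split; auto. left; reflexivity.
  - exists h, None, (Some (current_at E J2 h)). split; [eapply in_supp_In; eauto|].
    unfold record.
    destruct (excluded_middle_informative (in_supp E J1 h)); [contradiction|].
    destruct (excluded_middle_informative (touches_support E J1 h)); [|contradiction].
    destruct (excluded_middle_informative (in_supp E J2 h)); [|contradiction].
    repeat split; discriminate.
Qed.

Lemma currents_separated (E : list edge) (L : list (list Z3)) (o : edge) :
  NoDup E -> (forall J, In J L -> is_J E J /\ in_supp E J o) -> separated (record E) E L.
Proof.
  intros HE HL J J' HJ HJ' Hne.
  destruct (HL J HJ) as [[[HlJ _] [_ HconJ]] HoJ].
  destruct (HL J' HJ') as [[[HlJ' _] [_ HconJ']] HoJ'].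
  destruct (classic (exists f, in_supp E J' f /\ ~ in_supp E J f)) as [[f [Hf1 Hf2]]|Hsub1].
  { eapply records_conflict; eauto. }
  destruct (classic (exists f, in_supp E J f /\ ~ in_supp E J' f)) as [[f [Hf1 Hf2]]|Hsub2].
  { destruct (records_conflict E J' J o f) as [x [a [b [Hx [Ha [Hb Hab]]]]]]; auto.
    exists x, b, a; auto. }
  (* equal supports: the currents differ at an edge of the common support *)
  destruct (classic (exists e, In e E /\ current_at E J e <> current_at E J' e)) as [[e [He Hd]]|Hsame].
  2:{ exfalso. apply Hne. apply (current_ext E); auto.
      intros e He. apply NNPP. intros Hd. apply Hsame; eauto. }
  assert (Hs : in_supp E J e /\ in_supp E J' e).
  { destruct (classic (current_at E J e = z3zero)) as [Z|Z].
    - assert (in_supp E J' e) by (apply in_supp_iff; auto; split; auto; congruence).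
      split; auto. apply NNPP; intro; apply Hsub1; eauto.
    - assert (in_supp E J e) by (apply in_supp_iff; auto).
      split; auto. apply NNPP; intro; apply Hsub2; eauto. }
  exists e, (Some (current_at E J e)), (Some (current_at E J' e)). unfold record.
  destruct (excluded_middle_informative (in_supp E J e)); [|tauto].
  destruct (excluded_middle_informative (in_supp E J' e)); [|tauto].
  repeat split; auto. congruence.
Qed.

Definition edge_record_weight (G : lattice3) (b : R) (r : option Z3) : R :=
  match r with None => 1 / 2 | Some g => lattice_weight G b g end.

Lemma option_sum_split {V} (q : V -> R) (c : R) (rs : list (option V)) :
  NoDup rs -> exists vs, NoDup vs /\
    sumR (map (fun r => match r with None => c | Some v => q v end) rs) = indic (In None rs) * c + sumR (map q vs).
Proof.
  intros Hrs.
  enough (H : exists vs, NoDup vs /\ (forall v, In v vs -> In (Some v) rs) /\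
    sumR (map (fun r => match r with None => c | Some v => q v end) rs) = indic (In None rs) * c + sumR (map q vs))
    by (destruct H as [vs [H1 [_ H2]]]; eauto).
  induction Hrs as [|r rs Hr Hrs IH].
  - exists nil. simpl. rewrite indic_false by tauto. repeat split; [constructor|tauto|lra].
  - destruct IH as [vs [Hvs [Hsub Hsum]]]. destruct r as [v|].
    + exists (v :: vs). repeat split.
      * constructor; [intros Hv; apply Hr, Hsub, Hv|exact Hvs].
      * intros w [<-|Hw]; [left; reflexivity|right; auto].
      * simpl. rewrite Hsum, (indic_iff (Some v = None \/ In None rs) (In None rs))
          by (split; [intros [H|H]; [discriminate|exact H]|auto]). lra.
    + exists vs. repeat split; auto.
      * intros w Hw; right; auto.
      * simpl. rewrite Hsum, indic_false, indic_true by tauto. lra.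
Qed.

Lemma edge_record_weight_nonneg (G : lattice3) (b : R) (r : option Z3) : 0 <= edge_record_weight G b r.
Proof. destruct r; simpl; [apply lattice_weight_nonneg|lra]. Qed.

Lemma edge_record_weight_sum (G : lattice3) (b : R) :
  (forall L, NoDup L -> sumR (map (lattice_weight G b) L) <= 1 / 2) ->
  forall rs, NoDup rs -> sumR (map (edge_record_weight G b) rs) <= 1.
Proof.
  intros Hlat rs Hrs. destruct (option_sum_split (lattice_weight G b) (1 / 2) rs Hrs) as [vs [Hvs Hsum]].
  unfold edge_record_weight. rewrite Hsum. pose proof (Hlat vs Hvs); pose proof (indic_range (In None rs)). nra.
Qed.

Lemma edge_factor_bound (G : lattice3) (eta b1 s kap : R) (E : list edge) (J : list Z3) (e : edge) :
  (forall g, g <> z3zero -> eta <= gnorm G g) -> b1 <= s -> exp (- ((s - b1) * eta)) <= kap ->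
  NoDup E -> length J = length E -> In e E ->
  exp (- (s * gnorm G (current_at E J e))) <=
    (if holds (in_supp E J e) then kap else 1) *
    ((if holds (~ in_supp E J e /\ touches_support E J e) then 2 else 1) *
     record_weight (edge_record_weight G b1) (record E J e)).
Proof.
  intros Heta Hb1 Hkap HE HlJ He. unfold record, holds.
  destruct (excluded_middle_informative (in_supp E J e)) as [Hs|Hs].
  - destruct (excluded_middle_informative (~ in_supp E J e /\ touches_support E J e)) as [Hb|_]; [tauto|].
    simpl. apply in_supp_iff in Hs as [_ Hnz]; auto. unfold lattice_weight.
    destruct (excluded_middle_informative (current_at E J e = z3zero)) as [Hz|_]; [contradiction|].
    set (n := gnorm G (current_at E J e)). assert (Hn : eta <= n) by (apply Heta; auto).
    replace (- (s * n)) with (- ((s - b1) * n) + - b1 * n) by ring. rewrite exp_plus.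
    rewrite Rmult_1_l.
    apply Rmult_le_compat_r; [apply Rlt_le, exp_pos|].
    eapply Rle_trans; [apply exp_le|exact Hkap]. nra.
  - assert (Hz : current_at E J e = z3zero) by (apply NNPP; intro; apply Hs, in_supp_iff; auto).
    rewrite Hz, gnorm_zero, Rmult_0_r, Ropp_0, exp_0.
    destruct (excluded_middle_informative (~ in_supp E J e /\ touches_support E J e));
      destruct (excluded_middle_informative (touches_support E J e)); simpl; tauto || lra.
Qed.

(** With at most [2 D ns] touching edges, [ns >= 1] factors [y / 4^D] absorb the factors 2. *)
Lemma power_factor_bound (y : R) (D ns nb : nat) :
  0 <= y <= 1 -> (1 <= ns)%nat -> (nb <= 2 * D * ns)%nat -> (y / 4 ^ D) ^ ns * 2 ^ nb <= y.
Proof.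
  intros Hy Hns Hnb.
  assert (H4 : 0 < 4 ^ D) by (apply pow_lt; lra).
  assert (H2 : 2 ^ nb <= (4 ^ D) ^ ns).
  { replace ((4 ^ D) ^ ns) with (2 ^ (2 * D * ns)) by
      (rewrite (pow_mult 2 (2 * D) ns), (pow_mult 2 2 D); do 2 f_equal; simpl; lra).
    apply Rle_pow; [lra|exact Hnb]. }
  assert (H0 : 0 <= (y / 4 ^ D) ^ ns)
    by (apply pow_le, Rmult_le_pos; [lra|apply Rlt_le, Rinv_0_lt_compat, H4]).
  apply Rle_trans with ((y / 4 ^ D) ^ ns * (4 ^ D) ^ ns); [apply Rmult_le_compat_l; auto|].
  rewrite <- Rpow_mult_distr. replace (y / 4 ^ D * 4 ^ D) with y by (field; lra).
  destruct ns as [|ns]; [lia|]. simpl.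
  assert (y ^ ns <= 1) by (rewrite <- (pow1 ns); apply pow_incr; lra).
  pose proof (pow_le y ns (proj1 Hy)).
  nra.
Qed.

Lemma current_weight_bound (G : lattice3) (Gr : lgraph) (eta b1 s y : R) (D : nat)
    (E : list edge) (J : list Z3) (o : edge) :
  (forall g, g <> z3zero -> eta <= gnorm G g) -> 0 <= b1 <= s -> 0 <= y <= 1 ->
  exp (- ((s - b1) * eta)) * 4 ^ D <= y ->
  finite_edge_set Gr E -> degree_at_most Gr D -> is_current E J -> in_supp E J o ->
  exp (- (s * size G Gr E J)) <= y * weight (record E) (edge_record_weight G b1) E J.
Proof.
  intros Heta Hs Hy Hy4 HE HD [HlJ _] Ho.
  assert (H4 : 0 < 4 ^ D) by (apply pow_lt; lra).
  set (kap := y / 4 ^ D).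
  assert (Hkap : exp (- ((s - b1) * eta)) <= kap)
    by (unfold kap; apply Rmult_le_reg_r with (4 ^ D); [lra|]; unfold Rdiv;
        rewrite Rmult_assoc, Rinv_l; lra).
  apply Rle_trans with (exp (- (s * l1norm G J))).
  { apply exp_le. pose proof (l1norm_le_size G Gr E J). nra. }
  rewrite (l1norm_edges G E J) by (apply HE || exact HlJ). rewrite exp_neg_sum.
  eapply Rle_trans.
  { apply prodR_map_le. intros e He. split; [apply Rlt_le, exp_pos|].
    apply (edge_factor_bound G eta b1 s kap); auto; [lra|apply HE]. }
  rewrite !prodR_map_mult, !prodR_map_count, <- Rmult_assoc.
  apply Rmult_le_compat_r; [apply weight_nonneg, edge_record_weight_nonneg|].
  apply power_factor_bound; auto.
  - assert (Hin : In o (supp_edges E J))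
      by (apply filter_In; split; [eapply in_supp_In; eauto|apply holds_spec; exact Ho]).
    unfold countP. fold (supp_edges E J). destruct (supp_edges E J); [contradiction|simpl; lia].
  - apply (count_near_support Gr D E J); auto. tauto.
Qed.

Lemma polymer_sum_bound (G : lattice3) (Gr : lgraph) (eta b1 s y : R) (D : nat) :
  (forall g, g <> z3zero -> eta <= gnorm G g) ->
  (forall L, NoDup L -> sumR (map (lattice_weight G b1) L) <= 1 / 2) ->
  degree_at_most Gr D -> 0 <= b1 <= s -> 0 <= y <= 1 -> exp (- ((s - b1) * eta)) * 4 ^ D <= y ->
  forall E, finite_edge_set Gr E -> forall o (L : list (list Z3)), NoDup L ->
  (forall J, In J L -> is_J E J /\ in_supp E J o) ->
  sumR (map (fun J => exp (- (s * size G Gr E J))) L) <= y.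
Proof.
  intros Heta Hlat HD Hs Hy Hy4 E HE o L HL HJL.
  apply Rle_trans with (sumR (map (fun J => y * weight (record E) (edge_record_weight G b1) E J) L)).
  - apply sumR_map_le. intros J HJ. destruct (HJL J HJ) as [[HJ' _] Ho].
    eapply current_weight_bound; eauto.
  - rewrite sumR_map_scale.
    pose proof (separated_weight_sum (record E) (edge_record_weight G b1)
      (edge_record_weight_nonneg G b1) (edge_record_weight_sum G b1 Hlat) E L HL
      (currents_separated E L o (proj1 HE) HJL)).
    nra.
Qed.

(** [K(J) e^{a(J)} <= exp (- beta c6 size J)], since [eta |supp J| <= ||J||_1 <= size J]. *)
Lemma activity_bound (G : lattice3) (Gr : lgraph) (c eta c5 beta : R) (E : list edge) (J : list Z3) :
  (forall g, g <> z3zero -> eta <= gnorm G g) -> 0 < beta -> 0 < c5 ->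
  Kw G Gr c eta beta E J * exp (aw c5 eta beta J) <= exp (- (beta * c6 c eta c5 * size G Gr E J)).
Proof.
  intros Heta Hb Hc5. unfold Kw, aw, c6. rewrite <- exp_plus. apply exp_le.
  pose proof (l1norm_ge_supp_card G eta J Heta); pose proof (l1norm_le_size G Gr E J).
  assert (beta * c5 * (eta * INR (supp_card J)) <= beta * c5 * size G Gr E J)
    by (apply Rmult_le_compat_l; nra).
  nra.
Qed.

Lemma through_edge_sum (E : list edge) (Jt : list (list Z3)) (o : edge) (X F : list Z3 -> R) (y : R) :
  NoDup Jt -> (forall J, In J Jt -> is_J E J) -> (forall J, X J <= F J) ->
  (forall L, NoDup L -> (forall J, In J L -> is_J E J /\ in_supp E J o) -> sumR (map F L) <= y) ->
  sumR (map (fun J => indic (in_supp E J o) * X J) Jt) <= y.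
Proof.
  intros HJt HJ HXF HF.
  apply Rle_trans with (sumR (map (fun J => indic (in_supp E J o) * F J) Jt)).
  - apply sumR_map_le. intros J _. apply Rmult_le_compat_l; [apply indic_range|apply HXF].
  - rewrite sumR_indic_filter. apply HF; [apply NoDup_filter, HJt|].
    intros J HJf. apply filter_In in HJf as [HJin Ho]. rewrite holds_spec in Ho. auto.
Qed.

(** Third claim: the currents incompatible with [I] go through one of the at most
    [2 D |supp I|] edges touching [supp I]; each such edge contributes at most [y <= 1]. *)
Lemma incompatible_sum_bound (Gr : lgraph) (D : nat) (E : list edge) (Jt : list (list Z3))
    (I : list Z3) (K A : list Z3 -> R) (y rate : R) :
  finite_edge_set Gr E -> degree_at_most Gr D -> is_current E I ->
  (forall J, 0 <= K J * A J) -> 0 <= y <= 1 -> 2 * INR D <= rate ->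
  (forall f, In f E -> sumR (map (fun J => indic (in_supp E J f) * (K J * A J)) Jt) <= y) ->
  sumR (map (fun J => K J * indic (incompat E I J) * A J) Jt) <= rate * INR (supp_card I).
Proof.
  intros HE HD [HlI _] HX Hy Hrate Hloc.
  set (Near := edges_near E (supp_edges E I)).
  assert (HXf : forall J f, 0 <= indic (in_supp E J f) * (K J * A J))
    by (intros J f; apply Rmult_le_pos; [apply indic_range|apply HX]).
  apply Rle_trans with (sumR (map (fun J => sumR (map (fun f => indic (in_supp E J f) * (K J * A J)) Near)) Jt)).
  { apply sumR_map_le. intros J _.
    destruct (classic (incompat E I J)) as [[e [f [v [He [Hf [Hve Hvf]]]]]]|Hi].
    - rewrite indic_true by (exists e, f, v; auto).
      assert (Hnear : In f Near).
      { apply (edges_near_In E _ f e v); [eapply in_supp_In; eauto| |auto|auto].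
        apply filter_In; split; [eapply in_supp_In; eauto|apply holds_spec; exact He]. }
      eapply Rle_trans; [|apply (sumR_ge_term _ f Near Hnear (HXf J))].
      rewrite indic_true by exact Hf. lra.
    - rewrite indic_false by exact Hi. rewrite Rmult_0_r, Rmult_0_l.
      apply sumR_map_nonneg. intros f _. apply HXf. }
  rewrite sumR_swap.
  apply Rle_trans with (sumR (map (fun _ => y) Near)).
  { apply sumR_map_le. intros f Hf. apply Hloc.
    apply in_flat_map in Hf as [s [_ Hf]].
    apply in_app_or in Hf as [Hf|Hf]; apply filter_In in Hf; tauto. }
  rewrite sumR_map_const.
  assert (HlN : (length Near <= 2 * D * supp_card I)%nat).
  { rewrite (supp_card_count E I) by (apply HE || exact HlI). apply (edges_near_length Gr D E); auto. }
  apply le_INR in HlN. rewrite !mult_INR in HlN. simpl in HlN.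
  pose proof (pos_INR (length Near)); pose proof (pos_INR (supp_card I)). nra.
Qed.

Lemma lt_of_div_lt (a b beta : R) : 0 < b -> a / b < beta -> a < beta * b.
Proof.
  intros Hb H. apply (Rmult_lt_compat_r b) in H; [|exact Hb]. unfold Rdiv in H.
  rewrite Rmult_assoc, Rinv_l, Rmult_1_r in H by lra. exact H.
Qed.

(** For [beta] large, the decay rate [beta c6] beats [b1] and the degree factor [4^D], with
    room [beta c6 eta / 2] to spare, and [beta c5 eta] dominates [2 D]. *)
Lemma large_beta (c6 c5 eta b1 : R) (D : nat) :
  0 < c6 -> 0 < c5 -> 0 < eta -> 0 <= b1 ->
  exists beta0, forall beta, beta0 < beta ->
    0 < beta /\ b1 <= beta * c6 /\
    exp (- ((beta * c6 - b1) * eta)) * 4 ^ D <= exp (- (beta * (c6 * eta / 2))) /\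
    2 * INR D <= beta * c5 * eta.
Proof.
  intros Hc6 Hc5 Heta Hb1.
  assert (H4 : 0 < 4 ^ D) by (apply pow_lt; lra).
  assert (HD : 0 <= INR D) by apply pos_INR.
  set (t1 := b1 / c6). set (t2 := 2 * (4 ^ D + b1 * eta) / (c6 * eta)). set (t3 := 2 * INR D / (c5 * eta)).
  assert (Ht : 0 <= t1 /\ 0 <= t2 /\ 0 <= t3).
  { unfold t1, t2, t3; repeat split; apply Rmult_le_pos; try apply Rlt_le, Rinv_0_lt_compat; nra. }
  exists (t1 + t2 + t3). intros beta Hbeta.
  pose proof (lt_of_div_lt b1 c6 beta Hc6 ltac:(unfold t1 in *; lra)) as B1.
  pose proof (lt_of_div_lt (2 * (4 ^ D + b1 * eta)) (c6 * eta) beta ltac:(nra) ltac:(unfold t2 in *; lra)) as B2.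
  pose proof (lt_of_div_lt (2 * INR D) (c5 * eta) beta ltac:(nra) ltac:(unfold t3 in *; lra)) as B3.
  repeat split; try nra.
  set (t := beta * c6 * eta / 2 - b1 * eta).
  assert (4 ^ D <= exp t) by (pose proof (exp_ineq1_le t); unfold t in *; nra).
  apply Rle_trans with (exp (- ((beta * c6 - b1) * eta)) * exp t).
  - apply Rmult_le_compat_l; [apply Rlt_le, exp_pos|auto].
  - rewrite <- exp_plus. apply exp_le. unfold t. lra.
Qed.

Lemma min_norm_pos (G : lattice3) (eta : R) : rank3 G -> is_min_norm G eta -> 0 < eta.
Proof.
  intros HG [[k [Hk <-]] _]. destruct (gnorm_coord_lower_bound G HG) as [al [Hal Hlb]].
  pose proof (Hlb k); pose proof (coord_l1_ge1 k Hk). nra.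
Qed.

Theorem lemma3p3 (G : lattice3) (eta : R) (Gr : lgraph) (c c5 : R) :
  rank3 G -> is_min_norm G eta ->
  periodic_lattice_graph Gr -> bounded_degree Gr ->
  0 < c -> 0 < c5 -> c5 < c4 c eta ->
  exists c7 : R, 0 < c7 /\
  exists beta0 : R, forall beta : R, beta0 < beta ->
    (* first claim: the (nonnegative) series over J(E) with o in supp J,
       bounded via all its finite partial sums *)
    (forall E, finite_edge_set Gr E -> forall o, In o E ->
       forall L : list (list Z3), NoDup L ->
         (forall J, In J L -> is_J E J /\ in_supp E J o) ->
         sumR (map (fun J => exp (- (beta * c6 c eta c5 * size G Gr E J))) L)
           <= exp (- (beta * c7)))
    /\
    (forall E, finite_edge_set Gr E ->
       forall Jt : list (list Z3), NoDup Jt -> (forall J, In J Jt -> is_J E J) ->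
       forall o, In o E ->
         sumR (map (fun J => indic (in_supp E J o) *
                   (Kw G Gr c eta beta E J * exp (aw c5 eta beta J))) Jt)
           <= exp (- (beta * c7)))
    /\
    (forall E, finite_edge_set Gr E ->
       forall Jt : list (list Z3), NoDup Jt -> (forall J, In J Jt -> is_J E J) ->
       forall I, In I Jt ->
         sumR (map (fun J => Kw G Gr c eta beta E J * indic (incompat E I J) *
                   exp (aw c5 eta beta J)) Jt)
           <= aw c5 eta beta I).
Proof.
  intros HG Hmin _ [D HD] Hc Hc5 Hc54.
  pose proof (min_norm_pos G eta HG Hmin) as Heta.
  destruct Hmin as [_ Hge].
  destruct (lattice_exp_sum G HG) as [b1 [Hb1 Hlat]].
  assert (Hc6 : 0 < c6 c eta c5) by (unfold c6; lra).
  exists (c6 c eta c5 * eta / 2). split; [nra|].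
  destruct (large_beta (c6 c eta c5) c5 eta b1 D Hc6 Hc5 Heta (Rlt_le _ _ Hb1)) as [beta0 Hbeta0].
  exists beta0. intros beta Hbeta.
  destruct (Hbeta0 beta Hbeta) as [Hbeta_pos [Hb1s [Hdecay HD2]]].
  set (y := exp (- (beta * (c6 c eta c5 * eta / 2)))).
  assert (Hy : 0 <= y <= 1)
    by (split; [apply Rlt_le, exp_pos|rewrite <- exp_0; apply exp_le; nra]).
  assert (Claim1 := polymer_sum_bound G Gr eta b1 (beta * c6 c eta c5) y D Hge Hlat HD
                      ltac:(lra) Hy Hdecay).
  assert (Claim2 : forall E, finite_edge_set Gr E ->
      forall Jt : list (list Z3), NoDup Jt -> (forall J, In J Jt -> is_J E J) -> forall o,
      sumR (map (fun J => indic (in_supp E J o) *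
                (Kw G Gr c eta beta E J * exp (aw c5 eta beta J))) Jt) <= y).
  { intros E HE Jt HJt HJ o.
    apply (through_edge_sum E Jt o _ (fun J => exp (- (beta * c6 c eta c5 * size G Gr E J))) y HJt HJ).
    - intros J. apply activity_bound; auto.
    - apply Claim1, HE. }
  split; [|split].
  - intros E HE o _. apply Claim1, HE.
  - intros E HE Jt HJt HJ o _. apply Claim2; auto.
  - intros E HE Jt HJt HJ I HI. destruct (HJ I HI) as [HI' _].
    apply (incompatible_sum_bound Gr D E Jt I _ _ y); auto.
    intros J. apply Rmult_le_pos; apply Rlt_le, exp_pos.
Qed.
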